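(* Let $d,p\ge 1$ and consider the two-layer linear model $f_1(\mathbf{x})=\mathbf{W}_1\mathbf{x}$, $f_2(\mathbf{x})=\mathbf{W}_2\mathbf{W}_1\mathbf{x}$ with $\mathbf{W}_1\in\mathbb{R}^{p\times d}$, $\mathbf{W}_2\in\mathbb{R}^{p\times p}$. Let $(\mathbf{W}_1,\mathbf{W}_2)$ be a global minimizer of $\mathcal{L}_{CL}(f_2)$ which, among all global minimizers, has the smallest value of $\|\mathbf{W}_1^\top\mathbf{W}_1\|_F^2+\|\mathbf{W}_2^\top\mathbf{W}_2\|_F^2$. Then $\mathbf{W}_1\mathbf{W}_1^\top=\mathbf{W}_2^\top\mathbf{W}_2$.
   Context: Pretraining distribution $\mathcal{D}$: a random input $\mathbf{x}\in\mathbb{R}^d$ has independent coordinates, with $x_i$ uniform on $\{-\phi_i,\phi_i\}$, $\phi_i>0$. Augmentation $\mathcal{A}(\mathbf{x})$: for each coordinate $i$ independently, with probability $\alpha_i\in[0,1]$ the sign of $x_i$ is re-randomized (replaced by an independent uniform choice of $\pm\phi_i$), otherwise $x_i$ is kept, giving $\mathbf{x}'$; then independent noise $\boldsymbol{\xi}$ with $\mathbb{E}[\boldsymbol{\xi}]=0$, $\mathbb{E}[\boldsymbol{\xi}\boldsymbol{\xi}^\top]=\sigma^2\mathbf{I}$ is added, and the augmentation is $\mathbf{x}'+\boldsymbol{\xi}$. Different draws of $\mathcal{A}$ are independent. The spectral contrastive loss of a map $f$ is $\mathcal{L}_{CL}(f)=-2\,\mathbb{E}_{\mathbf{x}\sim\mathcal{D},\,\mathbf{x}_1^+,\mathbf{x}_2^+\sim\mathcal{A}(\mathbf{x})}[f(\mathbf{x}_1^+)^\top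 f(\mathbf{x}_2^+)]+\mathbb{E}_{\mathbf{x}_1,\mathbf{x}_2\sim\mathcal{D}\text{ i.i.d.}}[(f(\mathcal{A}(\mathbf{x}_1))^\top f(\mathcal{A}(\mathbf{x}_2)))^2]$, where $\mathbf{x}_1^+,\mathbf{x}_2^+$ are two independent augmentations of the same $\mathbf{x}$. *)

From HB Require Import structures.
From mathcomp Require Import all_boot all_order all_algebra.
From mathcomp Require Import all_classical all_reals all_analysis.
Set Implicit Arguments. Unset Strict Implicit. Unset Printing Implicit Defensive.
Import Order.TTheory GRing.Theory Num.Theory.
Import numFieldNormedType.Exports.
Local Open Scope classical_set_scope.
Local Open Scope ring_scope.

Section Defs.
Context (R : realType) (d p : nat).

Definition signv (phi : R) (b : bool) : R := if b then phi else - phi.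

(* probability of a sign pattern s of x ~ D (uniform on {+-phi_i}) *)
Definition sweight : R := \prod_(i < d) (1 / 2).

(* An augmentation draw (before noise) is u : {ffun 'I_d -> bool * bool}:
   (u i).1 = true iff coordinate i is re-randomized (probability alpha i),
   (u i).2 is the fresh uniform sign used in that case. *)
Definition aweight (alpha : 'I_d -> R) (u : {ffun 'I_d -> bool * bool}) : R :=
  \prod_(i < d) ((if (u i).1 then alpha i else 1 - alpha i) / 2).

Definition augx (phi : 'I_d -> R) (s : {ffun 'I_d -> bool})
    (u : {ffun 'I_d -> bool * bool}) : 'cV[R]_d :=
  \col_i (if (u i).1 then signv (phi i) (u i).2 else signv (phi i) (s i)).

Definition dotp (a b : 'cV[R]_p) : R := (a^T *m b) 0 0.

(* Spectral contrastive loss.  The noise xi is a random vector on the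
   probability space (T, P); independent noise draws are realised by
   iterated integrals over independent copies of (T, P). *)
Definition LCL (dT : measure_display) (T : measurableType dT)
    (P : probability T R) (xi : T -> 'cV[R]_d)
    (phi alpha : 'I_d -> R) (f : 'cV[R]_d -> 'cV[R]_p) : R :=
  - 2 * (\sum_(s : {ffun 'I_d -> bool}) sweight *
          \sum_(u1 : {ffun 'I_d -> bool * bool}) aweight alpha u1 *
          \sum_(u2 : {ffun 'I_d -> bool * bool}) aweight alpha u2 *
          Rintegral P setT (fun w1 => Rintegral P setT (fun w2 =>
            dotp (f (augx phi s u1 + xi w1)) (f (augx phi s u2 + xi w2)))))
  + (\sum_(s1 : {ffun 'I_d -> bool}) \sum_(s2 : {ffun 'I_d -> bool})
       sweight * sweight *
       \sum_(u1 : {ffun 'I_d -> bool * bool}) aweight alpha u1 *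
       \sum_(u2 : {ffun 'I_d -> bool * bool}) aweight alpha u2 *
       Rintegral P setT (fun w1 => Rintegral P setT (fun w2 =>
         (dotp (f (augx phi s1 u1 + xi w1)) (f (augx phi s2 u2 + xi w2))) ^+ 2))).

Definition frob2 (m n : nat) (M : 'M[R]_(m, n)) : R :=
  \sum_(i < m) \sum_(j < n) (M i j) ^+ 2.

Definition f2 (W1 : 'M[R]_(p, d)) (W2 : 'M[R]_p) (x : 'cV[R]_d) : 'cV[R]_p :=
  W2 *m (W1 *m x).

End Defs.

From HB Require Import structures.
From mathcomp Require Import all_boot all_order all_algebra.
From mathcomp Require Import all_classical all_reals all_analysis.
From mathcomp Require Import ring lra.
Set Implicit Arguments. Unset Strict Implicit. Unset Printing Implicit Defensive.
Import Order.TTheory GRing.Theory Num.Theory.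
Import numFieldNormedType.Exports.
Local Open Scope ring_scope.

(* The loss of f2 depends on (W1, W2) only through the product W2 W1, so every
   factorisation of that product is again a global minimiser, and (W1, W2)
   minimises tr((W1 W1^T)^2) + tr((W2^T W2)^2) over the fibre
   {(V1, V2) | V2 V1 = W2 W1}.
   The fibre contains ((I + tE) W1, W2 (I - tE)) for every square-zero E and
   (c W1, W2 / c) for c > 0.  Stationarity along these curves gives
   tr((P^2 - Q^2) E) = 0 and tr(P^2) = tr(Q^2), where P = W1 W1^T and
   Q = W2^T W2.  Square-zero matrices and the identity span all matrices under
   the trace pairing, so P^2 = Q^2, and positive semidefinite matrices with
   equal squares coincide. *)

Section Jet.
Variable R : realFieldType.

(* All perturbations below are polynomial in t, so a first-order expansion with
   polynomial remainder suffices and no analysis is needed. *)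
Definition jet (g : R -> R) (a b : R) :=
  exists q : {poly R}, forall t, g t = a + b * t + t ^+ 2 * q.[t].

Lemma jet_ext g h a b : (forall t, g t = h t) -> jet h a b -> jet g a b.
Proof. by move=> e [q hq]; exists q => t; rewrite e hq. Qed.

Lemma jet_cst c : jet (fun _ => c) c 0.
Proof. by exists 0 => t; rewrite horner0; ring. Qed.

Lemma jet_add g h a b c e : jet g a b -> jet h c e ->
  jet (fun t => g t + h t) (a + c) (b + e).
Proof. by move=> [q1 h1] [q2 h2]; exists (q1 + q2) => t; rewrite h1 h2 hornerD; ring. Qed.

Lemma jet_mul g h a b c e : jet g a b -> jet h c e ->
  jet (fun t => g t * h t) (a * c) (a * e + b * c).
Proof.
move=> [q1 h1] [q2 h2].
exists ((b * e)%:P + (a%:P + b%:P * 'X) * q2 + q1 * (c%:P + e%:P * 'X)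
   + 'X ^+ 2 * q1 * q2) => t.
by rewrite h1 h2 !(hornerD, hornerM, hornerC, hornerX, hornerXn); ring.
Qed.

Lemma jet_sum (I : finType) (g : I -> R -> R) a b :
  (forall i, jet (g i) (a i) (b i)) ->
  jet (fun t => \sum_i g i t) (\sum_i a i) (\sum_i b i).
Proof.
move=> gab; elim: (index_enum I) => [|i s IH].
  by rewrite !big_nil; apply: jet_ext (jet_cst 0) => t; rewrite big_nil.
rewrite !big_cons; apply: jet_ext (jet_add (gab i) IH) => t.
by rewrite big_cons.
Qed.

Lemma horner_bounded (q : {poly R}) :
  exists B : R, forall t, `|t| <= 1 -> `|q.[t]| <= B.
Proof.
exists (\sum_(i < size q) `|q`_i|) => t ht.
rewrite horner_coef; apply: le_trans (ler_norm_sum _ _ _) _.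
apply: ler_sum => i _; rewrite normrM normrX.
by rewrite ler_piMr // exprn_ile1.
Qed.

Lemma jet_slope_eq0 g a b : jet g a b -> (forall t, a <= g t) -> b = 0.
Proof.
move=> [q gE] gmin; have [B qB] := horner_bounded q.
have B0 : 0 <= B by apply: le_trans (qB 0 _); rewrite ?normr0 ?ler01.
have slope_small s : 0 < s <= 1 -> `|b| <= s * B.
  move=> /andP[s0 s1].
  have sn : `|s| <= 1 by rewrite ger0_norm // ltW.
  have [b0|b0] := lerP 0 b.
  - have := gmin (- s); have := qB (- s); have := ler_norm q.[- s].
    rewrite gE normrN sn (ger0_norm b0); nra.
  - have := gmin s; have := qB s; have := ler_norm q.[s].
    rewrite gE sn (ltr0_norm b0); nra.
apply/normr0_eq0/le_anti; rewrite normr_ge0 andbT leNgt; apply/negP => b0.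
pose s := `|b| / (`|b| + B).
have bB : 0 < `|b| + B by lra.
have sE : s * (`|b| + B) = `|b| by rewrite mulfVK // gt_eqF.
have s0 : 0 < s by rewrite divr_gt0.
have s1 : s <= 1 by rewrite ler_pdivrMr // mul1r lerDl.
have := slope_small s; rewrite s0 s1 => /(_ isT); nra.
Qed.

End Jet.

Section MatrixJet.
Variable R : realFieldType.

Definition mxjet m n (M : R -> 'M[R]_(m, n)) (A B : 'M[R]_(m, n)) :=
  forall i j, jet (fun t => M t i j) (A i j) (B i j).

Lemma mxjet_affine m n (A B : 'M[R]_(m, n)) : mxjet (fun t => A + t *: B) A B.
Proof. by move=> i j; exists 0 => t; rewrite !mxE horner0; ring. Qed.

Lemma mxjet_tr m n (M : R -> 'M[R]_(m, n)) A B :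
  mxjet M A B -> mxjet (fun t => (M t)^T) A^T B^T.
Proof. by move=> MAB i j; rewrite !mxE; apply: jet_ext (MAB j i) => t; rewrite mxE. Qed.

Lemma mxjet_mul m n k (M : R -> 'M[R]_(m, n)) (N : R -> 'M[R]_(n, k)) A B C D :
  mxjet M A B -> mxjet N C D ->
  mxjet (fun t => M t *m N t) (A *m C) (A *m D + B *m C).
Proof.
move=> MAB NCD i j; have := jet_sum (fun l => jet_mul (MAB i l) (NCD l j)).
rewrite !mxE -big_split /=; apply: jet_ext => t.
by rewrite mxE.
Qed.

Lemma jet_mxtrace_sqr n (M : R -> 'M[R]_n) A B : mxjet M A B ->
  jet (fun t => \tr (M t *m M t)) (\tr (A *m A)) (2 * \tr (A *m B)).
Proof.
move=> MAB; have := jet_sum (fun i => mxjet_mul MAB MAB i i).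
rewrite -!/(\tr _) mxtraceD [\tr (B *m A)]mxtrace_mulC -mulr2n mulr_natl.
exact: jet_ext.
Qed.

End MatrixJet.

Section TraceAlgebra.
Variable R : comPzRingType.

Lemma mxtrace_mul_delta n (X : 'M[R]_n) i j : \tr (X *m delta_mx i j) = X j i.
Proof.
rewrite -(mul_delta_mx (0 : 'I_1)) mulmxA mxtrace_mulC mulmxA -rowE -colE.
by rewrite trace_mx11 !mxE.
Qed.

Lemma mxtrace_sym_mul_symmetrized n (S X : 'M[R]_n) : S^T = S ->
  \tr (S *m (S *m X + (S *m X)^T)) = 2 * \tr (S *m S *m X).
Proof.
move=> S_sym; rewrite mulmxDr mxtraceD mulmxA mulr_natl mulr2n; congr (_ + _).
by rewrite -mxtrace_tr trmx_mul trmxK S_sym mxtrace_mulC mulmxA.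
Qed.

End TraceAlgebra.

Section Gram.
Variable R : realFieldType.

Lemma mxtrace_gramE m n (M : 'M[R]_(m, n)) :
  \tr (M^T *m M) = \sum_i \sum_k M k i ^+ 2.
Proof.
apply: eq_bigr => i _; rewrite mxE.
by apply: eq_bigr => k _; rewrite mxE expr2.
Qed.

Lemma mxtrace_gram_ge0 m n (M : 'M[R]_(m, n)) : 0 <= \tr (M^T *m M).
Proof.
rewrite mxtrace_gramE; apply: sumr_ge0 => i _.
by apply: sumr_ge0 => k _; apply: sqr_ge0.
Qed.

Lemma mxtrace_gram_eq0 m n (M : 'M[R]_(m, n)) : \tr (M^T *m M) = 0 -> M = 0.
Proof.
rewrite mxtrace_gramE => /psumr_eq0P col0; apply/matrixP => k i; rewrite mxE.
have /psumr_eq0P := col0 (fun i _ => sumr_ge0 _ (fun k _ => sqr_ge0 (M k i))) i isT.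
by move=> /(_ (fun k _ => sqr_ge0 (M k i)) k isT) /eqP; rewrite sqrf_eq0 => /eqP.
Qed.

Lemma gram_sqr_inj p d k (A : 'M[R]_(p, d)) (B : 'M[R]_(k, p)) :
  A *m A^T *m (A *m A^T) = B^T *m B *m (B^T *m B) -> A *m A^T = B^T *m B.
Proof.
(* P^2 = Q^2 makes D := P - Q anticommute with P + Q, so tr(D (P + Q) D) = 0,
   and this trace is a sum of two Gram traces. *)
set P := A *m A^T; set Q := B^T *m B => PQ2; set D := P - Q.
have D_sym : D^T = D by rewrite /D linearB /= /P /Q !trmx_mul !trmxK.
have anticomm : (P + Q) *m D + D *m (P + Q) = 0.
  rewrite /D !mulmxDl !mulmxDr !mulNmx !mulmxN PQ2.
  by apply/matrixP => i j; rewrite !mxE; ring.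
have tr0 : \tr (D *m (P + Q) *m D) = 0.
  have : \tr (D *m ((P + Q) *m D + D *m (P + Q))) = 0 by rewrite anticomm mulmx0 linear0.
  rewrite mulmxDr mxtraceD [\tr (D *m (D *m _))]mxtrace_mulC !mulmxA -mulr2n.
  by move=> /eqP; rewrite mulrn_eq0 /= => /eqP.
have trPQ : \tr ((A^T *m D)^T *m (A^T *m D)) + \tr ((B *m D)^T *m (B *m D)) = 0.
  rewrite !trmx_mul trmxK D_sym -tr0 mulmxDr mulmxDl mxtraceD.
  by rewrite /P /Q !mulmxA.
have AD_ge0 := mxtrace_gram_ge0 (A^T *m D).
have BD_ge0 := mxtrace_gram_ge0 (B *m D).
have AD0 : A^T *m D = 0 by apply: mxtrace_gram_eq0; lra.
have BD0 : B *m D = 0 by apply: mxtrace_gram_eq0; lra.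
have DD0 : D *m D = 0.
  by rewrite {1}/D mulmxBl /P /Q -!mulmxA AD0 BD0 !mulmx0 subrr.
apply/eqP; rewrite -subr_eq0; apply/eqP; apply: mxtrace_gram_eq0.
by rewrite D_sym DD0 linear0.
Qed.

End Gram.

Section SquareZeroDual.
Variable R : numFieldType.

Lemma mxtrace_orth_sqr0_eq0 n (X : 'M[R]_n) :
  (forall E, E *m E = 0 -> \tr (X *m E) = 0) -> \tr X = 0 -> X = 0.
Proof.
move=> Xorth trX0.
have offdiag i j : i != j -> X i j = 0.
  move=> ij; rewrite -(mxtrace_mul_delta X j i); apply: Xorth.
  by rewrite mul_delta_mx_cond (negbTE ij) mulr0n.
have diag i j : X i i = X j j.
  have [<- //|ij] := eqVneq i j.
  pose u : 'M[R]_(n, 1) := delta_mx i 0 + delta_mx j 0.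
  pose v : 'M[R]_(1, n) := delta_mx 0 i - delta_mx 0 j.
  have vu0 : v *m u = 0.
    rewrite mulmxBl !mulmxDr !mul_delta_mx_cond !eqxx (negbTE ij) eq_sym (negbTE ij).
    by rewrite !mulr0n !mulr1n addr0 add0r subrr.
  have := Xorth (u *m v); rewrite mulmxA -(mulmxA u) vu0 mulmx0 mul0mx => /(_ erefl).
  rewrite mulmxDl !mulmxDr !mulmxN !mul_delta_mx !mxtraceD !raddfN /=.
  rewrite !mxtrace_mul_delta (offdiag i j ij) (offdiag j i); last by rewrite eq_sym.
  by rewrite subr0 sub0r => /eqP; rewrite subr_eq0 => /eqP.
apply/matrixP => i j; rewrite mxE.
have [<-|ij] := eqVneq i j; last exact: offdiag.
move: trX0; rewrite /mxtrace (eq_bigr (fun _ => X i i)) => [|k _]; last exact: diag.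
have n_gt0 : (0 < n)%N := leq_ltn_trans (leq0n i) (ltn_ord i).
by rewrite sumr_const card_ord => /eqP; rewrite mulrn_eq0 gtn_eqF // => /eqP.
Qed.

End SquareZeroDual.

Lemma scaling_min_eq (R : rcfType) (a b : R) : 0 <= a -> 0 <= b ->
  (forall c, 0 < c -> a + b <= c ^+ 4 * a + b / c ^+ 4) -> a = b.
Proof.
move=> a0 b0 cmin.
have ymin (y : R) : 0 < y -> 0 <= (a * y - b) * (y - 1).
  move=> y0; pose c := Num.sqrt (Num.sqrt y).
  have c4 : c ^+ 4 = y by rewrite (exprM c 2 2) !sqr_sqrtr ?sqrtr_ge0 ?ltW.
  have := cmin c; rewrite c4 sqrtr_gt0 sqrtr_gt0 y0 => /(_ isT).
  have -> : y * a + b / y = (y * (y * a) + b) / y by field; rewrite gt_eqF.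
  rewrite ler_pdivlMr // => h; nra.
(* For y strictly between 1 and b / a the two factors have opposite signs. *)
have [ab|ab|//] := ltrgtP a b.
- pose y := 2 * b / (a + b).
  have yE : y * (a + b) = 2 * b by rewrite mulfVK // gt_eqF //; lra.
  have := mulr_ge0 (ymin y _) (sqr_ge0 (a + b)).
  rewrite divr_gt0 //; try lra; move=> /(_ isT).
  have e1 : (a * y - b) * (a + b) = b * (a - b) by rewrite mulrBl -mulrA yE; ring.
  have e2 : (y - 1) * (a + b) = b - a by rewrite mulrBl yE; ring.
  rewrite expr2 mulrACA e1 e2.
  have ba : 0 < b - a by lra.
  have := mulr_gt0 (le_lt_trans a0 ab) (mulr_gt0 ba ba).
  lra.
- pose y := (a + b) / (2 * a).
  have yE : y * (2 * a) = a + b by rewrite mulfVK // gt_eqF //; lra.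
  have := mulr_ge0 (ymin y _) (sqr_ge0 (2 * a)).
  rewrite divr_gt0 //; try lra; move=> /(_ isT).
  have e1 : (a * y - b) * (2 * a) = a * (a - b) by rewrite mulrBl -mulrA yE; ring.
  have e2 : (y - 1) * (2 * a) = b - a by rewrite mulrBl yE; ring.
  rewrite expr2 mulrACA e1 e2.
  have ab' : 0 < a - b by lra.
  have := mulr_gt0 (le_lt_trans b0 ab) (mulr_gt0 ab' ab').
  lra.
Qed.

Definition gram_energy (R : pzRingType) p d k
    (V1 : 'M[R]_(p, d)) (V2 : 'M[R]_(k, p)) : R :=
  \tr (V1 *m V1^T *m (V1 *m V1^T)) + \tr (V2^T *m V2 *m (V2^T *m V2)).

Section MinEnergyFactorization.
Variable R : realFieldType.
Variables (p d k : nat) (W1 : 'M[R]_(p, d)) (W2 : 'M[R]_(k, p)).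
Hypothesis W_min : forall (V1 : 'M[R]_(p, d)) (V2 : 'M[R]_(k, p)),
  V2 *m V1 = W2 *m W1 -> gram_energy W1 W2 <= gram_energy V1 V2.

Lemma min_energy_sqr0_orth (E : 'M[R]_p) : E *m E = 0 ->
  \tr ((W1 *m W1^T *m (W1 *m W1^T) - W2^T *m W2 *m (W2^T *m W2)) *m E) = 0.
Proof.
move=> E0; pose V1 t := W1 + t *: (E *m W1); pose V2 t := W2 + t *: - (W2 *m E).
have fiber t : V2 t *m V1 t = W2 *m W1.
  rewrite /V1 /V2 mulmxDl !mulmxDr -!scalemxAl -!scalemxAr scalerA.
  rewrite !mulNmx !mulmxA -(mulmxA W2 E E) E0 mulmx0 mul0mx.
  by rewrite oppr0 scaler0 addr0 scalerN addrK.
have jV1 := mxjet_affine W1 (E *m W1).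
have jV2 := mxjet_affine W2 (- (W2 *m E)).
have jP := jet_mxtrace_sqr (mxjet_mul jV1 (mxjet_tr jV1)).
have jQ := jet_mxtrace_sqr (mxjet_mul (mxjet_tr jV2) jV2).
have := jet_slope_eq0 (jet_add jP jQ) (fun t => W_min (fiber t)).
have slopeP : W1 *m (E *m W1)^T + E *m W1 *m W1^T
    = W1 *m W1^T *m E^T + (W1 *m W1^T *m E^T)^T.
  by rewrite !trmx_mul !trmxK !mulmxA.
have slopeQ : W2^T *m - (W2 *m E) + (- (W2 *m E))^T *m W2
    = - (W2^T *m W2 *m E + (W2^T *m W2 *m E)^T).
  by rewrite mulmxN linearN /= mulNmx opprD !trmx_mul trmxK !mulmxA.
have P_sym : (W1 *m W1^T)^T = W1 *m W1^T by rewrite trmx_mul trmxK.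
have Q_sym : (W2^T *m W2)^T = W2^T *m W2 by rewrite trmx_mul trmxK.
rewrite slopeP slopeQ mulmxN raddfN /= (mxtrace_sym_mul_symmetrized _ P_sym).
rewrite (mxtrace_sym_mul_symmetrized _ Q_sym).
rewrite -[\tr (_ *m E^T)]mxtrace_tr trmx_mul trmxK mxtrace_mulC trmx_mul P_sym.
rewrite mulmxBl mxtraceD raddfN /=; lra.
Qed.

Lemma min_energy_scaling (c : R) : 0 < c ->
  gram_energy W1 W2 <= c ^+ 4 * \tr (W1 *m W1^T *m (W1 *m W1^T))
                     + \tr (W2^T *m W2 *m (W2^T *m W2)) / c ^+ 4.
Proof.
move=> c0; have := W_min (V1 := c *: W1) (V2 := c^-1 *: W2).
rewrite -scalemxAl -scalemxAr scalerA mulVf ?gt_eqF // scale1r => /(_ erefl).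
rewrite /gram_energy !linearZ /= -!scalemxAl -!scalemxAr !scalerA !mxtraceZ.
set x := \tr (W1 *m _ *m _); set y := \tr (W2^T *m _ *m _).
suff -> : c * (c * c * c * x) + c^-1 * (c^-1 / c / c * y) = c ^+ 4 * x + y / c ^+ 4 by [].
by field; rewrite gt_eqF.
Qed.

End MinEnergyFactorization.

Lemma min_energy_factorization_balanced (R : rcfType) p d k
    (W1 : 'M[R]_(p, d)) (W2 : 'M[R]_(k, p)) :
  (forall (V1 : 'M[R]_(p, d)) (V2 : 'M[R]_(k, p)),
      V2 *m V1 = W2 *m W1 -> gram_energy W1 W2 <= gram_energy V1 V2) ->
  W1 *m W1^T = W2^T *m W2.
Proof.
move=> W_min; apply: gram_sqr_inj; apply/eqP; rewrite -subr_eq0; apply/eqP.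
apply: mxtrace_orth_sqr0_eq0 => [E|]; first exact: min_energy_sqr0_orth.
rewrite raddfB /=; apply/eqP; rewrite subr_eq0; apply/eqP.
apply: scaling_min_eq; last exact: min_energy_scaling.
- by have := mxtrace_gram_ge0 (W1 *m W1^T); rewrite trmx_mul trmxK.
- by have := mxtrace_gram_ge0 (W2^T *m W2); rewrite trmx_mul trmxK.
Qed.

Lemma frob2_mxtrace (R : realType) m n (M : 'M[R]_(m, n)) :
  frob2 M = \tr (M^T *m M).
Proof.
rewrite mxtrace_gramE /frob2 exchange_big /=.
by apply: eq_bigr => i _; apply: eq_bigr.
Qed.

Lemma frob2_gram_energy (R : realType) p d k
    (V1 : 'M[R]_(p, d)) (V2 : 'M[R]_(k, p)) :
  frob2 (V1^T *m V1) + frob2 (V2^T *m V2) = gram_energy V1 V2.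
Proof.
rewrite !frob2_mxtrace !trmx_mul !trmxK /gram_energy; congr (_ + _).
by rewrite !mulmxA mxtrace_mulC !mulmxA.
Qed.

Unset Implicit Arguments.
Local Open Scope classical_set_scope.

Theorem theorem3p3 (R : realType) (d p : nat) (hd : (0 < d)%N) (hp : (0 < p)%N)
  (phi alpha : 'I_d -> R)
  (hphi : forall i, 0 < phi i)
  (halpha : forall i, 0 <= alpha i <= 1)
  (sigma : R)
  (dT : measure_display) (T : measurableType dT) (P : probability T R)
  (xi : T -> 'cV[R]_d)
  (hxi_meas : forall i, measurable_fun setT (fun w => xi w i 0))
  (hxi_L2 : forall i, P.-integrable setT (fun w => ((xi w i 0) ^+ 2)%:E))
  (hxi_mean : forall i, (\int[P]_w (xi w i 0)%:E = 0)%E)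
  (hxi_cov : forall i j,
      (\int[P]_w (xi w i 0 * xi w j 0)%:E = (if i == j then sigma ^+ 2 else 0)%:E)%E)
  (W1 : 'M[R]_(p, d)) (W2 : 'M[R]_p)
  (hmin : forall (V1 : 'M[R]_(p, d)) (V2 : 'M[R]_p),
      LCL P xi phi alpha (f2 W1 W2) <= LCL P xi phi alpha (f2 V1 V2))
  (hnorm : forall (V1 : 'M[R]_(p, d)) (V2 : 'M[R]_p),
      (forall (U1 : 'M[R]_(p, d)) (U2 : 'M[R]_p),
          LCL P xi phi alpha (f2 V1 V2) <= LCL P xi phi alpha (f2 U1 U2)) ->
      frob2 (W1^T *m W1) + frob2 (W2^T *m W2) <= frob2 (V1^T *m V1) + frob2 (V2^T *m V2)) :
  W1 *m W1^T = W2^T *m W2.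
Proof.
apply: min_energy_factorization_balanced => V1 V2 same_product.
have same_model : f2 V1 V2 = f2 W1 W2.
  by apply: funext => x; rewrite /f2 !mulmxA same_product.
by rewrite -!frob2_gram_energy; apply: hnorm; rewrite same_model.
Qed.
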